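(* Let $G$ be a $(P_7, C_4, \text{diamond})$-free graph, let $v_1v_2\cdots v_7v_1$ be a $7$-hole of $G$, $A=\{v_1,\dots,v_7\}$, indices taken modulo 7. For $i\in\{1,\dots,7\}$ let $X_i=\{x\in N(A): N(x)\cap A=\{v_i,v_{i+3}\}\}$ and $Y_i=\{x\in N(A): N(x)\cap A=\{v_i,v_{i+3},v_{i+4}\}\}$. Then: (a) $N(A)=\bigcup_{i=1}^7 (X_i\cup Y_i)$; (b) $|X_i|\le 1$ and $|Y_i|\le 1$ for every $i$; (c) $N(A)$ is a stable set; (d) for each $i$, either $X_i=\emptyset$ or $X_{i+2}\cup X_{i+5}=\emptyset$; (e) for each $i$, either $Y_i=\emptyset$ or $Y_{i+3}\cup Y_{i+4}=\emptyset$; (f) for each $i$, either $X_i=\emptyset$ or $Y_i\cup Y_{i+1}\cup Y_{i+2}\cup Y_{i+3}=\emptyset$.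
   Context: All graphs are finite and simple. $G$ is $H$-free if it has no induced subgraph isomorphic to $H$; $P_t$, $C_t$ are the path and cycle on $t$ vertices; a diamond is two triangles sharing exactly one edge. A $k$-hole is an induced cycle of length $k$. For $X\subseteq V(G)$, $N(X)$ is the set of vertices outside $X$ having a neighbour in $X$. *)

From mathcomp Require Import all_boot.
Set Implicit Arguments. Unset Strict Implicit. Unset Printing Implicit Defensive.

(* A finite simple graph: vertex type T : finType, adjacency e : rel T,
   assumed symmetric and irreflexive (hypotheses of the theorem). *)

Definition induced_copy (T : finType) (e : rel T) (n : nat) (adj : rel 'I_n)
  (f : 'I_n -> T) : Prop :=
  injective f /\ forall a b : 'I_n, a != b -> e (f a) (f b) = adj a b.

Definition H_free (T : finType) (e : rel T) (n : nat) (adj : rel 'I_n) : Prop :=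
  ~ exists f : 'I_n -> T, induced_copy e adj f.

Definition P_adj (t : nat) : rel 'I_t :=
  fun a b => (a.+1 == b :> nat) || (b.+1 == a :> nat).

Definition C_adj (t : nat) : rel 'I_t :=
  fun a b => (a != b) && ((a.+1 %% t == b :> nat) || (b.+1 %% t == a :> nat)).

Definition diamond_adj : rel 'I_4 :=
  fun a b => (a != b) &&
    ~~ (((a == 0 :> nat) && (b == 3 :> nat)) || ((a == 3 :> nat) && (b == 0 :> nat))).

(* Index arithmetic modulo 7 (vertices v_1..v_7 relabelled v_0..v_6). *)
Definition idx7 (i : 'I_7) (k : nat) : 'I_7 := inord ((i + k) %% 7).

Definition hole7 (T : finType) (e : rel T) (v : 'I_7 -> T) : Prop :=
  injective v /\
  forall i j : 'I_7, e (v i) (v j) = (j == idx7 i 1) || (i == idx7 j 1).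

Definition nbhd_set (T : finType) (e : rel T) (X : {set T}) : {set T} :=
  [set x | (x \notin X) && [exists y in X, e x y]].

Definition nbrs_in (T : finType) (e : rel T) (x : T) (X : {set T}) : {set T} :=
  [set y in X | e x y].

Definition stable (T : finType) (e : rel T) (S : {set T}) : Prop :=
  forall x y, x \in S -> y \in S -> ~~ e x y.

From mathcomp Require Import all_boot zify.
Set Implicit Arguments. Unset Strict Implicit. Unset Printing Implicit Defensive.

(* A vertex x outside the hole A = {v_0, ..., v_6} is described by its
   profile, the boolean vector (x ~ v_0, ..., x ~ v_6).  One or two such
   vertices induce with the hole a graph on at most 9 vertices that depends
   only on their profiles and on whether they are adjacent: a configuration
   graph.  The proof reduces every part of the theorem to finitely many facts
   about configuration graphs:
   - a verified checker for induced copies of C4, the diamond and P7 in a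
     graph on {0, ..., N-1} (fed by an untrusted search) shows that a graph
     realized in G never contains one;
   - certificates checked by evaluation: a vertex of N(A) has one of the 14
     profiles of the X_i and Y_i; two vertices with the same such profile, or
     two adjacent vertices of N(A), create a forbidden subgraph; the profile
     pairs of parts (d), (e), (f) are incompatible;
   - X_i and Y_i are exactly the sets of vertices with the corresponding
     profile. *)

Definition c4_nat (a b : nat) : bool :=
  (a != b) && ((a.+1 %% 4 == b) || (b.+1 %% 4 == a)).
Definition diamond_nat (a b : nat) : bool :=
  (a != b) && ~~ (((a == 0) && (b == 3)) || ((a == 3) && (b == 0))).
Definition p7_nat (a b : nat) : bool := (a.+1 == b) || (b.+1 == a).

Definition is_copy (N n : nat) (g pat : nat -> nat -> bool) (w : seq nat) : bool :=
  [&& size w == n, uniq w, all (fun a => a < N) w &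
   all (fun a => all (fun b => (a == b) || (g (nth 0 w a) (nth 0 w b) == pat a b))
                     (iota 0 n)) (iota 0 n)].

Definition realizes (T : finType) (e : rel T) (N : nat) (g : nat -> nat -> bool)
    (f : nat -> T) : Prop :=
  {in [pred a | a < N] &, injective f} /\
  (forall a b, a < N -> b < N -> a != b -> e (f a) (f b) = g a b).

Lemma is_copy_sound (T : finType) (e : rel T) N n g (pat : nat -> nat -> bool)
    (adj : rel 'I_n) (f : nat -> T) (w : seq nat) :
  (forall a b : 'I_n, a != b -> adj a b = pat a b) ->
  realizes e N g f -> is_copy N n g pat w -> exists h, induced_copy e adj h.
Proof.
move=> adjE [f_inj fE] /and4P[/eqP size_w uniq_w /allP w_lt /allP w_adj].
have w_lt_N (a : 'I_n) : nth 0 w a < N by apply/w_lt/mem_nth; rewrite size_w.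
exists (fun a => f (nth 0 w a)); split.
  move=> a b /f_inj; rewrite !inE => /(_ (w_lt_N a) (w_lt_N b)) /eqP.
  by rewrite nth_uniq ?size_w // => /eqP /val_inj.
move=> a b ab; rewrite adjE // fE // ?nth_uniq ?size_w //.
have a_in : val a \in iota 0 n by rewrite mem_iota /=.
have /allP /(_ b) := w_adj a a_in.
by rewrite mem_iota /= val_eqE (negbTE ab) ltn_ord => /(_ isT) /eqP.
Qed.

(* Untrusted search: extend every partial copy by one compatible vertex. Its
   output is only ever used after validation by is_copy. *)
Definition extend_copies (N : nat) (g pat : nat -> nat -> bool) (ws : seq (seq nat)) :=
  flatten [seq [seq rcons w c | c <- iota 0 N &
     (c \notin w) && all (fun j => g (nth 0 w j) c == pat j (size w)) (iota 0 (size w))]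
   | w <- ws].

Definition find_copy (N : nat) (g : nat -> nat -> bool) (n : nat) (pat : nat -> nat -> bool) :=
  if iter n (extend_copies N g pat) [:: [::]] is w :: _ then is_copy N n g pat w else false.

Lemma find_copy_sound N g n pat : find_copy N g n pat -> exists w, is_copy N n g pat w.
Proof. by rewrite /find_copy; case: (iter n _ _) => // w _; exists w. Qed.

Definition has_forbidden (N : nat) (g : nat -> nat -> bool) : bool :=
  [|| find_copy N g 4 c4_nat, find_copy N g 4 diamond_nat | find_copy N g 7 p7_nat].

Lemma realized_no_forbidden (T : finType) (e : rel T)
    (hP7 : H_free e (@P_adj 7)) (hC4 : H_free e (@C_adj 4)) (hD : H_free e diamond_adj)
    N g (f : nat -> T) :
  realizes e N g f -> ~~ has_forbidden N g.
Proof.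
move=> hf; apply/negP; case/or3P=> /find_copy_sound [w hw].
- by apply: hC4; apply: is_copy_sound hf hw.
- by apply: hD; apply: is_copy_sound hf hw.
- by apply: hP7; apply: is_copy_sound hf hw.
Qed.

Definition hole_nat (a b : nat) : bool := (b == (a + 1) %% 7) || (a == (b + 1) %% 7).

(* The configuration graph: the hole on {0, ..., 6}, a vertex 7 attached
   according to s, a vertex 8 attached according to t, and 7 ~ 8 iff bxy. *)
Definition config (s t : seq bool) (bxy : bool) (a b : nat) : bool :=
  if (a < 7) && (b < 7) then hole_nat a b
  else if a < 7 then (if b == 7 then nth false s a else nth false t a)
  else if b < 7 then (if a == 7 then nth false s b else nth false t b)
  else (a != b) && bxy.

Definition attachX (i : nat) : seq bool :=
  [seq (j == i) || (j == (i + 3) %% 7) | j <- iota 0 7].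
Definition attachY (i : nat) : seq bool :=
  [seq [|| j == i, j == (i + 3) %% 7 | j == (i + 4) %% 7] | j <- iota 0 7].

Definition attachments : seq (seq bool) :=
  [seq attachX i | i <- iota 0 7] ++ [seq attachY i | i <- iota 0 7].

Fixpoint bit_vectors (n : nat) : seq (seq bool) :=
  if n is n'.+1 then [seq b :: s | b <- [:: false; true], s <- bit_vectors n'] else [:: [::]].

Lemma bit_vectorsP n s : size s = n -> s \in bit_vectors n.
Proof.
elim: n s => [|n IH] [|b s] //= [/IH s_in].
have b_in : b \in [:: false; true] by case: b.
exact: (allpairs_f (fun b s => b :: s) b_in s_in).
Qed.

Definition twins_forbidden (s : seq bool) : bool :=
  has_forbidden 9 (config s s false) && has_forbidden 9 (config s s true).

Definition conflict (s t : seq bool) : bool :=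
  [&& s != t, has_forbidden 9 (config s t false) & has_forbidden 9 (config s t true)].

Lemma attachments_nonempty : all (has id) attachments.
Proof. vm_cast_no_check (erefl true). Qed.

Lemma single_vertex_attachments :
  all (fun s => [|| ~~ has id s, s \in attachments | has_forbidden 8 (config s s false)])
      (bit_vectors 7).
Proof. vm_cast_no_check (erefl true). Qed.

Lemma twin_attachments : all twins_forbidden attachments.
Proof. vm_cast_no_check (erefl true). Qed.

Lemma adjacent_attachments :
  all (fun s => all (fun t => has_forbidden 9 (config s t true)) attachments) attachments.
Proof. vm_cast_no_check (erefl true). Qed.

Lemma conflicting_attachments :
  all (fun i => [&& all (conflict (attachX i)) [:: attachX ((i + 2) %% 7); attachX ((i + 5) %% 7)],
    all (conflict (attachY i)) [:: attachY ((i + 3) %% 7); attachY ((i + 4) %% 7)] &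
    all (conflict (attachX i))
      [:: attachY i; attachY ((i + 1) %% 7); attachY ((i + 2) %% 7); attachY ((i + 3) %% 7)]])
    (iota 0 7).
Proof. vm_cast_no_check (erefl true). Qed.

Lemma idx7E (i : 'I_7) k : idx7 i k = (i + k) %% 7 :> nat.
Proof. by rewrite /idx7 inordK // ltn_pmod. Qed.

Section SevenHole.

Variables (T : finType) (e : rel T) (v : 'I_7 -> T).
Hypotheses (e_sym : symmetric e) (e_irr : irreflexive e) (hv : hole7 e v).
Hypotheses (hP7 : H_free e (@P_adj 7)) (hC4 : H_free e (@C_adj 4))
  (hD : H_free e diamond_adj).

Local Notation A := [set v i | i : 'I_7].
Local Notation NA := (nbhd_set e A).
Local Notation Xset i := [set x in NA | nbrs_in e x A == [set v i; v (idx7 i 3)]].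
Local Notation Yset i :=
  [set x in NA | nbrs_in e x A == [set v i; v (idx7 i 3); v (idx7 i 4)]].

Definition profile (x : T) : seq bool := [seq e x (v (inord j)) | j <- iota 0 7].

Lemma size_profile x : size (profile x) = 7.
Proof. by rewrite size_map size_iota. Qed.

Lemma nth_profile x a : a < 7 -> nth false (profile x) a = e x (v (inord a)).
Proof. by move=> a7; rewrite (nth_map 0) ?size_iota // nth_iota. Qed.

Definition config_map (x y : T) (a : nat) : T :=
  if a < 7 then v (inord a) else if a == 7 then x else y.

(* config_map is injective on [0, N): the hole is injective, x and y lie
   outside it, and x and y only need to differ when both are used (N = 9). *)
Lemma config_map_inj N x y : x \notin A -> y \notin A -> N <= 9 ->
  (N <= 8) || (x != y) -> {in [pred a | a < N] &, injective (config_map x y)}.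
Proof.
move=> xA yA N9 xy a b; rewrite !inE /config_map => aN bN.
have inA (k : nat) : v (inord k) \in A by rewrite imset_f.
case: (ltnP a 7) => a7; case: (ltnP b 7) => b7.
- by move/hv.1/(congr1 val); rewrite /= !inordK.
- by case: ifP => _ eq; [move: xA | move: yA]; rewrite -eq inA.
- by case: ifP => _ eq; [move: xA | move: yA]; rewrite eq inA.
- have a78 : a = 7 \/ a = 8 by lia.
  have b78 : b = 7 \/ b = 8 by lia.
  move: aN bN; case: a78 => ->; case: b78 => ->.
  all: move=> /= aN bN eq //; move: xy; rewrite eq eqxx /= orbF; lia.
Qed.

Lemma config_map_adj x y a b : a < 9 -> b < 9 -> a != b ->
  e (config_map x y a) (config_map x y b) = config (profile x) (profile y) (e x y) a b.
Proof.
rewrite /config_map /config => a9 b9 ab.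
case: (ltnP a 7) => a7; case: (ltnP b 7) => b7 /=.
- by rewrite hv.2 -!val_eqE /= !idx7E !inordK.
- by case: ifP => _; rewrite e_sym nth_profile.
- by case: ifP => _; rewrite nth_profile.
- move: ab; have [-> | ->] : a = 7 \/ a = 8 by lia.
  all: have [-> | ->] : b = 7 \/ b = 8 by lia.
  all: by rewrite //= e_sym.
Qed.

Lemma realizes_pair x y : x \notin A -> y \notin A -> x != y ->
  realizes e 9 (config (profile x) (profile y) (e x y)) (config_map x y).
Proof. by move=> xA yA xy; split; [exact: config_map_inj | exact: config_map_adj]. Qed.

Lemma realizes_single x : x \notin A ->
  realizes e 8 (config (profile x) (profile x) false) (config_map x x).
Proof.
move=> xA; split; first exact: config_map_inj.
by move=> a b a8 b8 ab; rewrite config_map_adj ?e_irr //; lia.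
Qed.

Lemma no_conflict x y : x \notin A -> y \notin A -> ~~ conflict (profile x) (profile y).
Proof.
move=> xA yA; apply/negP => /and3P[neq forb_nonadj forb_adj].
have xy : x != y by apply: contraNneq neq => ->.
have /negP := realized_no_forbidden hP7 hC4 hD (realizes_pair xA yA xy).
by case: (e x y).
Qed.

Definition with_profile (s : seq bool) : {set T} :=
  [set x | (x \notin A) && (profile x == s)].

Lemma nbhd_setE : NA = [set x | (x \notin A) && has id (profile x)].
Proof.
apply/setP => x; rewrite !inE; congr (_ && _).
apply/existsP/hasP => [[_ /andP[/imsetP[j _ ->] xj]] | [b /mapP[j j7 ->] xj]].
  by exists (e x (v j)); rewrite // -(inord_val j) -nth_profile // mem_nth ?size_profile.
by exists (v (inord j)); rewrite imset_f.
Qed.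

Lemma nbrs_in_eq x (P : {set 'I_7}) s : size s = 7 ->
    (forall j : 'I_7, (j \in P) = nth false s j) ->
  (nbrs_in e x A == v @: P) = (profile x == s).
Proof.
move=> size_s PE.
have -> : nbrs_in e x A = v @: [set j | e x (v j)].
  apply/setP => z; rewrite !inE; apply/andP/imsetP => [[/imsetP[j _ ->] xj] | [j]].
    by exists j; rewrite ?inE.
  by rewrite inE => xj ->; rewrite imset_f.
rewrite (inj_eq (imset_inj hv.1)); apply/eqP/eqP => [attachE | profE].
  apply: (@eq_from_nth _ false); rewrite ?size_profile // => j j7.
  by rewrite nth_profile // -(inordK (j7 : j < 7)) -PE -attachE inE inordK.
by apply/setP => j; rewrite inE PE -profE nth_profile ?inord_val.
Qed.

Lemma attachX_in (i : 'I_7) : attachX i \in attachments.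
Proof. by rewrite mem_cat map_f // mem_iota ltn_ord. Qed.

Lemma attachY_in (i : 'I_7) : attachY i \in attachments.
Proof. by rewrite mem_cat orbC map_f // mem_iota ltn_ord. Qed.

Lemma with_profile_nbhd s : s \in attachments ->
  [set x in NA | profile x == s] = with_profile s.
Proof.
move=> s_in; apply/setP => x; rewrite nbhd_setE !inE -andbA.
by case: eqP => [->|]; rewrite ?andbF // (allP attachments_nonempty _ s_in).
Qed.

Lemma Xset_profile (i : 'I_7) : Xset i = with_profile (attachX i).
Proof.
rewrite -with_profile_nbhd ?attachX_in //; apply: eq_finset => x.
have -> : [set v i; v (idx7 i 3)] = v @: [set i; idx7 i 3].
  by rewrite imsetU1 imset_set1.
rewrite (nbrs_in_eq _ _ (s := attachX i)) ?size_map ?size_iota //.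
by move=> j; rewrite (nth_map 0) ?size_iota // nth_iota // !inE -!val_eqE /= idx7E.
Qed.

Lemma Yset_profile (i : 'I_7) : Yset i = with_profile (attachY i).
Proof.
rewrite -with_profile_nbhd ?attachY_in //; apply: eq_finset => x.
have -> : [set v i; v (idx7 i 3); v (idx7 i 4)] = v @: [set i; idx7 i 3; idx7 i 4].
  by rewrite !imsetU !imset_set1.
rewrite (nbrs_in_eq _ _ (s := attachY i)) ?size_map ?size_iota //.
by move=> j; rewrite (nth_map 0) ?size_iota // nth_iota // !inE -!val_eqE /= !idx7E add0n orbA.
Qed.

Lemma nbhd_outside x : x \in NA -> x \notin A.
Proof. by rewrite nbhd_setE inE => /andP[]. Qed.

Lemma nbhd_attachment x : x \in NA -> profile x \in attachments.
Proof.
rewrite nbhd_setE inE => /andP[xA nonempty].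
have /allP /(_ _ (bit_vectorsP (size_profile x))) := single_vertex_attachments.
rewrite nonempty /= => /orP[// | forb].
by have /negP := realized_no_forbidden hP7 hC4 hD (realizes_single xA).
Qed.

Lemma neighbourhood_cover : NA = \bigcup_(i : 'I_7) (Xset i :|: Yset i).
Proof.
apply/setP => x; apply/idP/bigcupP => [xN | [i _]]; last first.
  by rewrite !inE => /orP[] /andP[].
have xA := nbhd_outside xN.
have := nbhd_attachment xN; rewrite mem_cat => /orP[] /mapP[i].
all: rewrite mem_iota => /= i7 prof; exists (inord i) => //.
all: by rewrite inE Xset_profile Yset_profile !inE xA inordK // prof eqxx ?orbT.
Qed.

Lemma with_profile_twins s : twins_forbidden s -> #|with_profile s| <= 1.
Proof.
move=> /andP[forb_nonadj forb_adj]; apply/card_le1_eqP => x y.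
rewrite !inE => /andP[xA /eqP px] /andP[yA /eqP py]; apply/eqP/contraT => yx.
have /negP := realized_no_forbidden hP7 hC4 hD (realizes_pair yA xA yx).
by rewrite px py; case: (e y x).
Qed.

Lemma attachment_classes_small (i : 'I_7) : #|Xset i| <= 1 /\ #|Yset i| <= 1.
Proof.
rewrite Xset_profile Yset_profile.
by split; apply/with_profile_twins/(allP twin_attachments); rewrite ?attachX_in ?attachY_in.
Qed.

Lemma neighbourhood_stable : stable e NA.
Proof.
move=> x y xN yN; apply/negP => exy.
have xy : x != y by apply: contraTneq exy => ->; rewrite e_irr.
have /negP := realized_no_forbidden hP7 hC4 hD
  (realizes_pair (nbhd_outside xN) (nbhd_outside yN) xy); apply.
rewrite exy; apply: (allP (allP adjacent_attachments _ (nbhd_attachment xN))).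
exact: nbhd_attachment.
Qed.

Lemma with_profile_exclusive s ts : all (conflict s) ts ->
  with_profile s = set0 \/ {in ts, forall t, with_profile t = set0}.
Proof.
move=> /allP conflicts; case: (set_0Vmem (with_profile s)) => [-> | [x]]; [by left |].
rewrite inE => /andP[xA /eqP px]; right => t /conflicts st; apply/setP => y; rewrite !inE.
by apply/negP => /andP[yA /eqP py]; move: (no_conflict xA yA); rewrite px py st.
Qed.

Lemma conflicts_at (i : 'I_7) :
  [&& all (conflict (attachX i)) [:: attachX ((i + 2) %% 7); attachX ((i + 5) %% 7)],
    all (conflict (attachY i)) [:: attachY ((i + 3) %% 7); attachY ((i + 4) %% 7)] &
    all (conflict (attachX i))
      [:: attachY i; attachY ((i + 1) %% 7); attachY ((i + 2) %% 7); attachY ((i + 3) %% 7)]].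
Proof. by apply: (allP conflicting_attachments); rewrite mem_iota ltn_ord. Qed.

Lemma Xset_exclusive (i : 'I_7) :
  Xset i = set0 \/ Xset (idx7 i 2) :|: Xset (idx7 i 5) = set0.
Proof.
rewrite !Xset_profile !idx7E; have [+ _ _] := and3P (conflicts_at i).
case/with_profile_exclusive => [-> | empty]; [by left | right].
by rewrite !empty ?inE ?eqxx ?orbT // setU0.
Qed.

Lemma Yset_exclusive (i : 'I_7) :
  Yset i = set0 \/ Yset (idx7 i 3) :|: Yset (idx7 i 4) = set0.
Proof.
rewrite !Yset_profile !idx7E; have [_ + _] := and3P (conflicts_at i).
case/with_profile_exclusive => [-> | empty]; [by left | right].
by rewrite !empty ?inE ?eqxx ?orbT // setU0.
Qed.

Lemma XYset_exclusive (i : 'I_7) : Xset i = set0 \/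
  Yset i :|: Yset (idx7 i 1) :|: Yset (idx7 i 2) :|: Yset (idx7 i 3) = set0.
Proof.
rewrite Xset_profile !Yset_profile !idx7E; have [_ _ +] := and3P (conflicts_at i).
case/with_profile_exclusive => [-> | empty]; [by left | right].
by rewrite !empty ?inE ?eqxx ?orbT // !setU0.
Qed.

End SevenHole.

Theorem mainTheorem7 (T : finType) (e : rel T)
  (e_sym : symmetric e) (e_irr : irreflexive e)
  (hP7 : H_free e (@P_adj 7)) (hC4 : H_free e (@C_adj 4))
  (hD : H_free e diamond_adj)
  (v : 'I_7 -> T) (hv : hole7 e v) :
  let A : {set T} := [set v i | i : 'I_7] in
  let NA := nbhd_set e A in
  let X := fun i : 'I_7 =>
    [set x in NA | nbrs_in e x A == [set v i; v (idx7 i 3)]] in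
  let Y := fun i : 'I_7 =>
    [set x in NA | nbrs_in e x A == [set v i; v (idx7 i 3); v (idx7 i 4)]] in
  (* (a) *) NA = \bigcup_(i : 'I_7) (X i :|: Y i) /\
  (* (b) *) (forall i, #|X i| <= 1 /\ #|Y i| <= 1) /\
  (* (c) *) stable e NA /\
  (* (d) *) (forall i, X i = set0 \/ X (idx7 i 2) :|: X (idx7 i 5) = set0) /\
  (* (e) *) (forall i, Y i = set0 \/ Y (idx7 i 3) :|: Y (idx7 i 4) = set0) /\
  (* (f) *) (forall i, X i = set0 \/
               Y i :|: Y (idx7 i 1) :|: Y (idx7 i 2) :|: Y (idx7 i 3) = set0).
Proof.
move=> A NA X Y.
split; first exact: (neighbourhood_cover e_sym e_irr hv hP7 hC4 hD).
split; first exact: (attachment_classes_small e_sym e_irr hv hP7 hC4 hD).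
split; first exact: (neighbourhood_stable e_sym e_irr hv hP7 hC4 hD).
split; first exact: (Xset_exclusive e_sym e_irr hv hP7 hC4 hD).
split; first exact: (Yset_exclusive e_sym e_irr hv hP7 hC4 hD).
exact: (XYset_exclusive e_sym e_irr hv hP7 hC4 hD).
Qed.
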